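(* Suppose $\mathbf{v}=(v_0,\dots,v_{n-1})\in\mathrm{GF}(q^m)^n$ has rank $r\ge1$. Then $\mathcal{L}=\langle\mathbf{v}\rangle^\perp$ is equivalent to the $(n-r)$-th order $\mathbf{B}$-elementary extension (for some $\mathbf{B}$) of an $(r,r-1)$ linear code over $\mathrm{GF}(q^m)$ with minimum rank distance $2$.
   Context: $q$ is a prime power. For $\mathbf{x}\in\mathrm{GF}(q^m)^N$, $\mathrm{rk}(\mathbf{x})$ is the dimension over $\mathrm{GF}(q)$ of the $\mathrm{GF}(q)$-span of its coordinates; the rank distance is $\mathrm{rk}(\mathbf{x}-\mathbf{y})$ and the minimum rank distance of a code is its minimum over pairs of distinct codewords. An $(N,K)$ linear code is a $K$-dimensional $\mathrm{GF}(q^m)$-subspace of $\mathrm{GF}(q^m)^N$. $\langle\mathbf{v}\rangle=\{a\mathbf{v}:a\in\mathrm{GF}(q^m)\}$, $S^\perp=\{\mathbf{u}:\sum_iu_is_i=0\ \forall\mathbf{s}\in S\}$. For $s\ge1$ and an $s\times r$ matrix $\mathbf{B}$ over $\mathrm{GF}(q)$, the $s$-th order $\mathbf{B}$-elementary extension of a linear code $\mathcal{C}_0\subseteq\mathrm{GF}(q^m)^r$ is $\{(c_0,\dots,c_{r+s-1})\in\mathrm{GF}(q^m)^{r+s}:(c_0,\dots,c_{r-1})-(c_r,\dots,c_{r+s-1})\mathbf{B}\in\mathcal{C}_0\}$; the $0$-th order extension is $\mathcal{C}_0$. Two codes $\mathcal{C},\mathcal{C}'\subseteq\mathrm{GF}(q^m)^n$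 are equivalent (for the rank metric) if $\mathcal{C}'=\{\mathbf{c}\mathbf{M}:\mathbf{c}\in\mathcal{C}\}$ for some invertible $n\times n$ matrix $\mathbf{M}$ over $\mathrm{GF}(q)$. *)

(* GF(q) = F : finFieldType, GF(q^m) = L : fieldExtType F. *)
From HB Require Import structures.
From mathcomp Require Import all_boot all_order all_algebra all_field.
Set Implicit Arguments. Unset Strict Implicit. Unset Printing Implicit Defensive.
Import GRing.Theory.
Local Open Scope ring_scope.

Section RankCodes.
Variables (F : finFieldType) (L : fieldExtType F).

Definition coords (N : nat) (x : 'rV[L]_N) : seq L := [seq x 0 i | i <- enum 'I_N].

Definition rk (N : nat) (x : 'rV[L]_N) : nat := \dim (<<coords x>>%VS : {vspace L}).

Definition mulFL (a b : nat) (x : 'rV[L]_a) (M : 'M[F]_(a, b)) : 'rV[L]_b :=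
  \row_(j < b) \sum_(i < a) M i j *: x 0 i.

Definition perp_span (N : nat) (v : 'rV[L]_N) : 'rV[L]_N -> Prop :=
  fun u => forall s, s \in (<[v]>%VS : {vspace 'rV[L]_N}) ->
             \sum_(i < N) u 0 i * s 0 i = 0.

(* The (N - r)-th order B-elementary extension of C0 (length r) :
   codewords (c_0,...,c_{N-1}) with (c_0..c_{r-1}) - (c_r..c_{N-1}) B \in C0.
   (Used with r <= N; for N = r this is C0 itself.) *)
Definition elem_ext (N r : nat) (B : 'M[F]_(N - r, r)) (C0 : {vspace 'rV[L]_r})
  : 'rV[L]_N -> Prop :=
  fun c => (\row_(i < r) (coords c)`_i
            - mulFL (\row_(j < N - r) (coords c)`_(r + j)) B) \in C0.

(* minimum rank distance of a linear code; convention: a code with fewer than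
   two codewords (the zero code) has minimum distance N+1 (Singleton convention) *)
Definition min_rank_dist (N : nat) (C : {vspace 'rV[L]_N}) (d : nat) : Prop :=
  if C == 0%VS then d = N.+1 else
  (forall c c', c \in C -> c' \in C -> c != c' -> (d <= rk (c - c'))%N) /\
  (exists c c', [/\ c \in C, c' \in C, c != c' & rk (c - c') = d]).

Definition code_equiv (N : nat) (C C' : 'rV[L]_N -> Prop) : Prop :=
  exists M : 'M[F]_N, M \in unitmx /\
    forall x, C' x <-> exists2 c, C c & x = mulFL c M.

End RankCodes.

(* Let r = rk v. Gaussian elimination over GF(q) of the coordinate matrix of v
   gives a GF(q)-basis w_0, ..., w_(r-1) of the span of the coordinates and an
   invertible P over GF(q) with v_i = sum_(k < r) P_ik w_k.  Then c is
   orthogonal to v iff the first r coordinates of c P are orthogonal to w, so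
   <v>^perp P is the extension with B = 0 of the parity-check code
   <w>^perp in GF(q^m)^r, of dimension r - 1.  A nonzero codeword of rank 1
   is a GF(q^m)-multiple of a vector over GF(q), hence would give a GF(q)-linear
   relation among the w_k; and w_1 e_0 - w_0 e_1 is a codeword of rank 2. *)
From HB Require Import structures.
From mathcomp Require Import all_boot all_order all_algebra all_field.
Set Implicit Arguments. Unset Strict Implicit. Unset Printing Implicit Defensive.
Import GRing.Theory.
Local Open Scope ring_scope.
Import VectorInternalTheory.

Section RankCodes.
Variables (F : finFieldType) (L : fieldExtType F).

Lemma coordsE N (y : 'rV[L]_N) i (lt_iN : (i < N)%N) :
  (coords y)`_i = y 0 (Ordinal lt_iN).
Proof.
rewrite /coords (nth_map (Ordinal lt_iN)) ?size_enum_ord //.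
by congr (y 0 _); apply: val_inj; rewrite /= nth_enum_ord.
Qed.

Lemma coords_mktuple N (y : 'rV[L]_N) : coords y = [tuple y 0 i | i < N].
Proof. by rewrite /coords -val_ord_tuple. Qed.

Lemma rk_leq_size N (y : 'rV[L]_N) : (rk y <= N)%N.
Proof. by rewrite /rk (leq_trans (dim_span _)) // size_map size_enum_ord. Qed.

Lemma rk_leq_dimv N (y : 'rV[L]_N) (U : {vspace L}) :
  (forall i, y 0 i \in U) -> (rk y <= \dim U)%N.
Proof. by move=> yU; apply/dimvS/span_subvP => _ /mapP[i _ ->]; apply: yU. Qed.

Lemma rk_fullP r (w : 'rV[L]_r) :
  reflect (forall k : 'I_r -> F, \sum_i k i *: w 0 i = 0 -> forall i, k i = 0)
          (rk w == r).
Proof.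
have -> : (rk w == r) = free [tuple w 0 i | i < r].
  by rewrite /rk coords_mktuple /free size_tuple.
have sumE (k : 'I_r -> F) :
    \sum_(i < r) k i *: [tuple w 0 i | i < r]`_i = \sum_i k i *: w 0 i.
  by apply: eq_bigr => i _; rewrite nth_mktuple.
by apply: (iffP freeP) => free_w k; [rewrite -sumE | rewrite sumE]; apply: free_w.
Qed.

Lemma rk_full_neq0 r (w : 'rV[L]_r) : rk w = r -> forall i, w 0 i != 0.
Proof.
move/eqP/rk_fullP => free_w i; apply/eqP => wi0.
have sum0 : \sum_k (k == i)%:R *: w 0 k = 0.
  by rewrite (bigD1 i) //= big1 => [|k /negbTE->]; rewrite ?wi0 ?scaler0 ?scale0r ?addr0.
by move/eqP: (free_w _ sum0 i); rewrite eqxx oner_eq0.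
Qed.

Lemma rk_full_neq0_row r (w : 'rV[L]_r) : rk w = r -> (0 < r)%N -> w != 0.
Proof. by move=> rk_w r_gt0; apply/rV0Pn; exists (Ordinal r_gt0); apply: rk_full_neq0. Qed.

Lemma rk_le1_line N (y : 'rV[L]_N) j :
  y 0 j != 0 -> (rk y <= 1)%N -> forall i, y 0 i \in <[y 0%R j]>%VS.
Proof.
move=> yj_neq0 rk_le1 i.
have line_sub : (<[y 0%R j]> <= <<coords y>>)%VS.
  by rewrite -memvE memv_span // map_f ?mem_enum.
have span_sub : (<<coords y>> <= <[y 0%R j]>)%VS.
  rewrite -(dimv_leqif_sup line_sub).2 dim_vline yj_neq0 eqn_leq rk_le1.
  by rewrite (leq_trans _ (dimvS line_sub)) // dim_vline yj_neq0.
by apply: (subvP span_sub); rewrite memv_span // map_f ?mem_enum.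
Qed.

Lemma mulFLA a b c (x : 'rV[L]_a) (A : 'M[F]_(a, b)) (B : 'M[F]_(b, c)) :
  mulFL (mulFL x A) B = mulFL x (A *m B).
Proof.
apply/rowP => j; rewrite !mxE.
under eq_bigr => i _ do rewrite mxE scaler_sumr.
rewrite exchange_big /=; apply: eq_bigr => l _; rewrite mxE scaler_suml.
by apply: eq_bigr => i _; rewrite scalerA mulrC.
Qed.

Lemma mulFL1 a (x : 'rV[L]_a) : mulFL x 1%:M = x.
Proof.
apply/rowP => j; rewrite !mxE (bigD1 j) //= big1 ?addr0 ?mxE ?eqxx ?scale1r //.
by move=> i /negbTE ij; rewrite mxE ij scale0r.
Qed.

Lemma mulFL0 a b (x : 'rV[L]_a) : mulFL x (0 : 'M[F]_(a, b)) = 0.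
Proof. by apply/rowP => j; rewrite !mxE big1 // => i _; rewrite mxE scale0r. Qed.

Lemma perp_spanE N (v u : 'rV[L]_N) :
  perp_span v u <-> \sum_i u 0 i * v 0 i = 0.
Proof.
split=> [uv | uv _ /vlineP[a ->]]; first by apply: uv; apply: memv_line.
under eq_bigr => i _ do rewrite mxE mulrCA.
by rewrite -mulr_sumr uv mulr0.
Qed.

Lemma elem_ext0E N r (le_rN : (r <= N)%N) (C0 : {vspace 'rV[L]_r}) c :
  elem_ext 0 C0 c = (\row_(k < r) c 0 (widen_ord le_rN k) \in C0).
Proof.
rewrite /elem_ext mulFL0 subr0; congr (_ \in C0); apply/rowP => k.
by rewrite !mxE (coordsE c (widen_ord_proof k le_rN)); congr (c 0 _); apply: val_inj.
Qed.

Lemma code_equiv_mulFL N (C C' : 'rV[L]_N -> Prop) (M : 'M[F]_N) :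
  M \in unitmx -> (forall c, C c <-> C' (mulFL c M)) -> code_equiv C C'.
Proof.
move=> M_unit CC'; exists M; split=> // x; split=> [C'x | [c /CC' C'cM ->] //].
have xK : x = mulFL (mulFL x (invmx M)) M by rewrite mulFLA mulVmx ?mulFL1.
by exists (mulFL x (invmx M)); [apply/CC'; rewrite -xK | ].
Qed.

Definition parity_code r (w : 'rV[L]_r) : {vspace 'rV[L]_r} :=
  lker (linfun (mulmxr w^T : 'rV[L]_r -> 'rV[L]_1)).

Section ParityCode.
Variables (r : nat) (w : 'rV[L]_r).

Lemma mem_parity_code y :
  (y \in parity_code w) = (\sum_k y 0 k * w 0 k == 0).
Proof.
have yw : (y *m w^T) 0 0 = \sum_k y 0 k * w 0 k.
  by rewrite mxE; apply: eq_bigr => k _; rewrite mxE.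
rewrite memv_ker lfunE /=; apply/eqP/eqP => yw0; first by rewrite -yw yw0 mxE.
by apply/matrixP => i j; rewrite !ord1 yw yw0 mxE.
Qed.

Lemma dim_parity_code : w != 0 -> \dim (parity_code w) = r.-1.
Proof.
case/rV0Pn => k wk_neq0; rewrite /parity_code; set f := linfun _.
have dim_img : \dim (f @: fullv) = 1%N.
  apply/eqP; rewrite eqn_leq (leq_trans (dimvS (subvf _))) ?dimvf ?dim_matrix //=.
  rewrite lt0n dimv_eq0; apply: contraNneq wk_neq0 => img0.
  have := memv_img f (memvf (delta_mx 0 k)).
  by rewrite img0 memv0 lfunE /= -rowE => /eqP/rowP/(_ 0); rewrite !mxE => ->.
have := limg_ker_dim f fullv; rewrite capfv dimvf dim_matrix mul1r dim_img addn1.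
by move/(congr1 predn).
Qed.

Hypothesis rk_w : rk w = r.

Lemma rk_parity_code_ge2 d : d \in parity_code w -> d != 0 -> (2 <= rk d)%N.
Proof.
move=> d_in /rV0Pn[j dj_neq0]; rewrite leqNgt; apply: (contra _ dj_neq0) => rk_le1.
have /fin_all_exists[f d_prop] : forall k, exists a : F, d 0 k = a *: d 0 j.
  by move=> k; apply/vlineP; apply: rk_le1_line.
have sum_dw : \sum_k d 0 k * w 0 k = d 0 j * \sum_k f k *: w 0 k.
  by rewrite mulr_sumr; apply: eq_bigr => k _; rewrite d_prop -scalerAl scalerAr.
have fw0 : \sum_k f k *: w 0 k = 0.
  by move: d_in; rewrite mem_parity_code sum_dw mulf_eq0 (negbTE dj_neq0) => /eqP.
have /rk_fullP free_w : rk w == r by apply/eqP.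
by rewrite d_prop (free_w _ fw0) scale0r.
Qed.

Lemma parity_code_rk2 :
  (1 < r)%N -> exists c, [/\ c \in parity_code w, c != 0 & rk c = 2].
Proof.
move=> lt1r; pose i0 := Ordinal (ltnW lt1r); pose i1 := Ordinal lt1r.
have i10 : (i1 == i0) = false by [].
pose c := \row_k (if k == i0 then w 0 i1 else if k == i1 then - w 0 i0 else 0).
have c_in : c \in parity_code w.
  rewrite mem_parity_code (bigD1 i0) //= (bigD1 i1) ?i10 //= big1 ?addr0.
    by rewrite !mxE eqxx i10 eqxx mulNr mulrC subrr.
  by move=> k /andP[/negbTE k0 /negbTE k1]; rewrite mxE k0 k1 mul0r.
have c_neq0 : c != 0 by apply/rV0Pn; exists i0; rewrite mxE eqxx rk_full_neq0.
exists c; split=> //; apply/eqP; rewrite eqn_leq rk_parity_code_ge2 // andbT.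
have c_sub : forall k, c 0 k \in (<[w 0%R i1]> + <[w 0%R i0]>)%VS.
  move=> k; rewrite mxE; case: ifP => _; first exact/(subvP (addvSl _ _))/memv_line.
  case: ifP => _; last exact: mem0v.
  by apply/(subvP (addvSr _ _)); rewrite memvN memv_line.
apply: leq_trans (rk_leq_dimv c_sub) _.
by apply: leq_trans (dimv_add_leqif _ _).1 _; rewrite !dim_vline leq_add ?leq_b1.
Qed.

Lemma min_rank_dist_parity_code : (0 < r)%N -> min_rank_dist (parity_code w) 2.
Proof.
move=> r_gt0; rewrite /min_rank_dist -dimv_eq0 dim_parity_code ?rk_full_neq0_row //.
(* for r = 1 the code is zero, and the convention of min_rank_dist asks for r.+1 = 2 *)
case: ifP => [/eqP dim0 | /negbT dim_neq0]; first by rewrite -(prednK r_gt0) dim0.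
have lt1r : (1 < r)%N by rewrite -(prednK r_gt0) ltnS lt0n.
split=> [c c' c_in c'_in c_neq_c' | ].
  by apply: rk_parity_code_ge2; rewrite ?memvB ?subr_eq0.
have [c [c_in c_neq0 rk_c]] := parity_code_rk2 lt1r.
by exists c, 0; rewrite subr0 mem0v.
Qed.

End ParityCode.

Lemma memv_v2r (vT : vectType F) (x : vT) (U : {vspace vT}) :
  (x \in U) = (v2r x <= vs2mx U)%MS.
Proof. by rewrite unfold_in /= genmxE. Qed.

Definition coord_mx N (y : 'rV[L]_N) : 'M[F]_(N, dim L) :=
  \matrix_(i < N) v2r (y 0 i).

Lemma rank_coord_mx N (y : 'rV[L]_N) : \rank (coord_mx y) = rk y.
Proof.
have -> : rk y = \dim (mx2vs (coord_mx y) : {vspace L}).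
  congr (\dim _); apply/eqP; rewrite eqEsubv; apply/andP; split.
    apply/span_subvP => _ /mapP[i _ ->].
    by rewrite memv_v2r genmxE -[v2r _](rowK (fun i => v2r (y 0 i))) row_sub.
  rewrite /subsetv mx2vsK; apply/row_subP => i.
  by rewrite rowK -memv_v2r memv_span // map_f ?mem_enum.
by rewrite /dimv mx2vsK.
Qed.

(* Gaussian elimination writes V := coord_mx y as col_ebase V *m pid_mx (rk y) *m row_ebase V,
   so the first rk y rows of row_ebase V are a GF(q)-basis of the row space of V,
   i.e. of the span of the coordinates of y. *)
Definition rk_basis N (y : 'rV[L]_N) : 'rV[L]_(rk y) :=
  \row_k r2v (row k (pid_mx (rk y) *m row_ebase (coord_mx y))).

Lemma rk_basis_coords N (y : 'rV[L]_N) (le_rN : (rk y <= N)%N) i :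
  y 0 i = \sum_k col_ebase (coord_mx y) i (widen_ord le_rN k) *: rk_basis y 0 k.
Proof.
set V := coord_mx y.
have -> : y 0 i = r2v (row i V) by rewrite rowK v2rK.
have -> : row i V = row i (col_ebase V *m (pid_mx (rk y) *m row_ebase V)).
  by rewrite mulmxA -rank_coord_mx mulmx_ebase.
rewrite row_mul mulmx_sum_row linear_sum (bigID (fun k : 'I_N => (k < rk y)%N)) /=.
rewrite big_ord_narrow [X in _ + X]big1 ?addr0 => [|k k_ge].
  apply: eq_bigr => k _; rewrite linearZ /= !mxE !row_mul.
  by congr (_ *: r2v (_ *m _)); apply/rowP => j; rewrite !mxE.
rewrite row_mul (_ : row k _ = 0) ?mul0mx ?scaler0 ?linear0 //.
by apply/rowP => j; rewrite !mxE (negbTE k_ge) andbF.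
Qed.

Lemma rk_basis_full N (y : 'rV[L]_N) : rk (rk_basis y) = rk y.
Proof.
apply/eqP/rk_fullP => k sum0 i; set V := coord_mx y.
have le_r_dim : (rk y <= dim L)%N by rewrite -rank_coord_mx rank_leq_col.
pose c : 'rV[F]_(rk y) := \row_i k i.
have cW0 : c *m (pid_mx (rk y) *m row_ebase V) = 0.
  apply: r2v_inj; rewrite linear0 mulmx_sum_row linear_sum -[RHS]sum0.
  by apply: eq_bigr => j _; rewrite linearZ !mxE.
have cpid0 : c *m (pid_mx (rk y) : 'M_(rk y, dim L)) = 0.
  by rewrite -[LHS](mulmxK (row_ebase_unit V)) -[_ *m row_ebase V]mulmxA cW0 mul0mx.
have cK : c *m (pid_mx (rk y) : 'M_(rk y, dim L)) *m pid_mx (rk y) = c.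
  by rewrite -mulmxA mul_pid_mx minnn (minn_idPr le_r_dim) pid_mx_1 mulmx1.
by move: cK; rewrite cpid0 mul0mx => /rowP/(_ i); rewrite !mxE.
Qed.

Lemma perp_span_parity_code N r (le_rN : (r <= N)%N) (v : 'rV[L]_N)
    (P : 'M[F]_N) (w : 'rV[L]_r) :
  (forall i, v 0 i = \sum_k P i (widen_ord le_rN k) *: w 0 k) ->
  forall c, perp_span v c <-> elem_ext 0 (parity_code w) (mulFL c P).
Proof.
move=> v_coords c; apply: iff_trans (perp_spanE v c) _.
rewrite elem_ext0E mem_parity_code.
have -> : \sum_i c 0 i * v 0 i
    = \sum_k (\row_k (mulFL c P) 0 (widen_ord le_rN k)) 0 k * w 0 k.
  under eq_bigr => i _ do rewrite v_coords mulr_sumr.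
  rewrite exchange_big /=; apply: eq_bigr => k _; rewrite !mxE mulr_suml.
  by apply: eq_bigr => i _; rewrite -scalerAr scalerAl.
by split=> /eqP.
Qed.

End RankCodes.

Theorem corollary1 (F : finFieldType) (L : fieldExtType F) (n : nat)
  (v : 'rV[L]_n) :
  (1 <= rk v)%N ->
  exists (B : 'M[F]_(n - rk v, rk v)) (C0 : {vspace 'rV[L]_(rk v)}),
    [/\ \dim C0 = (rk v).-1,
        min_rank_dist C0 2
      & code_equiv (perp_span v) (elem_ext B C0)].
Proof.
move=> rk_gt0; have w_full := rk_basis_full v.
exists 0, (parity_code (rk_basis v)); split.
- exact/dim_parity_code/rk_full_neq0_row.
- exact: min_rank_dist_parity_code.
- apply: (code_equiv_mulFL (col_ebase_unit (coord_mx v))).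
  exact: perp_span_parity_code (rk_basis_coords (rk_leq_size v)).
Qed.
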